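(* Let $K$ be a finite field of characteristic $2$, let $P=\begin{pmatrix}1&1\\0&1\end{pmatrix}$, $Q=\begin{pmatrix}1&0\\1&1\end{pmatrix}\in M_2(K)$, and define on $K\times K$ (column vectors) the operation $x\cdot y:=Q^{-1}x+Py$. Then $(K\times K,\cdot)$ is an indecomposable and irretractable cycle set, and for every $(x_1,x_2)^T\in K\times K$, $$\langle (x_1,x_2)^T\rangle=\begin{cases}\{(x_1,x_2)^T\} & \text{if } x_1=x_2,\\ \{(x_1,x_2)^T,(x_1,x_1)^T,(x_2,x_2)^T,(x_2,x_1)^T\} & \text{if } x_1\neq x_2.\end{cases}$$
   Context: A cycle set is a non-empty set $X$ with one operation $\cdot$ such that each $\sigma_x:y\mapsto x\cdot y$ is bijective and $(x\cdot y)\cdot(x\cdot z)=(y\cdot x)\cdot(y\cdot z)$ for all $x,y,z$. A sub-cycle set is a subset that is a cycle set under the restricted operation; $\langle x\rangle$ is the smallest sub-cycle set containing $x$. $X$ is indecomposable if it admits no partition into two nonempty sub-cycle sets (for finite $X$, equivalently the group generated by all $\sigma_x$ acts transitively). The retraction $\mathrm{Ret}(X)$ is the quotient of $X$ by $x\sim y\iff\sigma_x=\sigma_y$ with induced operation; a finite cycle set $X$ is irretractable if its absolute retraction $\mathrm{Ret}^m(X)$ ($m$ smallest with $\mathrm{Ret}^m(X)\cong\mathrm{Ret}^{m+1}(X)$) is isomorphic to $X$. *)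

From HB Require Import structures.
From mathcomp Require Import all_boot all_algebra all_field.
Set Implicit Arguments. Unset Strict Implicit. Unset Printing Implicit Defensive.
Import GRing.Theory.
Local Open Scope ring_scope.

Record magma := Magma { carrier :> finType; mop : carrier -> carrier -> carrier }.

Section CycleSets.
Variable X : magma.
Local Notation op := (@mop X).

Definition sigma (x : X) : {ffun X -> X} := [ffun y => op x y].

Definition is_cycle_set : Prop :=
  (forall x : X, bijective (op x)) /\
  (forall x y z : X, op (op x y) (op x z) = op (op y x) (op y z)).

(** S is a sub-cycle set: nonempty, closed under the operation, and each
    restricted sigma_x (x in S) is a bijection S -> S (the cycle set identity
    is inherited from X). *)
Definition sub_cycle_set (S : {set X}) : Prop :=
  [/\ S != set0,
      (forall x y, x \in S -> y \in S -> op x y \in S),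
      (forall x, x \in S -> {in S &, injective (op x)}) &
      (forall x z, x \in S -> z \in S -> exists2 y, y \in S & op x y = z)].

Definition generated (x : X) (S : {set X}) : Prop :=
  [/\ sub_cycle_set S, x \in S &
      forall T : {set X}, sub_cycle_set T -> x \in T -> S \subset T].

Definition indecomposable : Prop :=
  ~ exists A B : {set X}, [/\ sub_cycle_set A, sub_cycle_set B,
                              A :&: B = set0 & A :|: B = setT].
End CycleSets.

(** Retraction: quotient of X by x ~ y iff sigma_x = sigma_y, realised as the
    set of the sigma_x, with induced operation [x].[y] := [x.y]
    (computed through chosen representatives). *)
Definition ret_carrier (X : magma) : finType :=
  {f : {ffun X -> X} | f \in codom (@sigma X)}.

Definition ret_repr (X : magma) (a : ret_carrier X) : X := iinv (valP a).

Definition ret_op (X : magma) (a b : ret_carrier X) : ret_carrier X :=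
  exist _ (sigma (mop (ret_repr a) (ret_repr b))) (codom_f _ _).

Definition Ret (X : magma) : magma := Magma (@ret_op X).

Definition magma_iso (X Y : magma) : Prop :=
  exists f : X -> Y, bijective f /\
    forall x y : X, f (mop x y) = mop (f x) (f y).

(** Irretractable: the absolute retraction Ret^m(X) (m least with
    Ret^m(X) ~= Ret^(m+1)(X)) is isomorphic to X. *)
Definition irretractable (X : magma) : Prop :=
  exists m : nat,
    [/\ (forall k, (k < m)%N -> ~ magma_iso (iter k Ret X) (iter k.+1 Ret X)),
        magma_iso (iter m Ret X) (iter m.+1 Ret X) &
        magma_iso (iter m Ret X) X].

Definition matP (K : finFieldType) : 'M[K]_2 :=
  \matrix_(i, j) (if (i <= j)%N then 1 else 0).
Definition matQ (K : finFieldType) : 'M[K]_2 :=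
  \matrix_(i, j) (if (j <= i)%N then 1 else 0).
Definition col2 (K : finFieldType) (a b : K) : 'cV[K]_2 :=
  \col_(i < 2) (if i == ord0 then a else b).

Definition KMagma (K : finFieldType) : magma :=
  @Magma 'cV[K]_2 (fun x y => invmx (matQ K) *m x + matP K *m y).

From HB Require Import structures.
From mathcomp Require Import all_boot all_algebra all_field ring.
Import GRing.Theory.
Local Open Scope ring_scope.

(* In characteristic 2, Q^-1 = Q, so x.y = Qx + Py is a linear magma
   x.y = Ax + By.  Such a magma is a cycle set as soon as B is invertible and
   A^2 + BA = AB, which holds for A = Q, B = P.  It is indecomposable because
   every b equals x.a for some x (A invertible): were a and b in complementary
   sub-cycle sets, x would lie in one of them and drag a and b into the same
   one.  It is its own retraction because x |-> sigma_x is injective.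
   In coordinates (a,b).(c,d) = (a+c+d, a+b+d): each coordinate of a product
   is a sum of three coordinates of the factors, and in characteristic 2 such
   a sum of elements of {x1,x2} stays in {x1,x2}; conversely the four vectors
   are x, x.x, x.(x.x) and (x.x).x for x = (x1,x2). *)

Section SubCycleSets.
Variable X : magma.
Hypothesis op_inj : forall x : X, injective (mop x).

Lemma sub_cycle_set_closed (S : {set X}) :
  S != set0 -> (forall x y, x \in S -> y \in S -> mop x y \in S) ->
  sub_cycle_set S.
Proof.
move=> S0 Scl; split=> // [x _ | x z xS zS]; first exact: in2W (op_inj x).
have imS : mop x @: S = S.
  apply/eqP; rewrite eqEcard card_imset // leqnn andbT.
  by apply/subsetP => _ /imsetP[y yS ->]; apply: Scl.
have /imsetP[y yS ->] : z \in mop x @: S by rewrite imS.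
by exists y.
Qed.

Lemma generated_closed (x : X) (S : {set X}) :
  x \in S -> (forall y z, y \in S -> z \in S -> mop y z \in S) ->
  (forall T : {set X}, (forall y z, y \in T -> z \in T -> mop y z \in T) ->
     x \in T -> S \subset T) ->
  generated x S.
Proof.
move=> xS Scl Smin; split=> //; last by move=> T [_ Tcl _ _]; apply: Smin.
by apply: sub_cycle_set_closed => //; apply/set0Pn; exists x.
Qed.

Lemma indecomposable_left_transitive :
  (forall a b : X, exists x, mop x a = b) -> indecomposable X.
Proof.
move=> trans [A [B [[/set0Pn[a aA] Acl _ _] [/set0Pn[b bB] _ _ Bsurj] AB0 ABT]]].
have disjAB y : y \in A -> y \in B -> False.
  by move=> yA yB; have := in_set0 y; rewrite -AB0 inE yA yB.
have [x xab] := trans a b.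
have : x \in A :|: B by rewrite ABT inE.
case/setUP => [xA | xB]; first by apply: (disjAB b) => //; rewrite -xab Acl.
have [y yB xyb] := Bsurj x b xB bB.
have ay : a = y by apply: (op_inj x); rewrite xab xyb.
by apply: (disjAB a aA); rewrite ay.
Qed.

End SubCycleSets.

Section Irretractable.
Variable X : magma.
Hypothesis sigma_inj : injective (@sigma X).

Definition ret_of (x : X) : Ret X := exist _ (sigma x) (codom_f (@sigma X) x).

Lemma ret_reprK : cancel ret_of (@ret_repr X).
Proof. by move=> x; apply: sigma_inj; rewrite /ret_repr f_iinv. Qed.

Lemma ret_ofK : cancel (@ret_repr X) ret_of.
Proof. by move=> a; apply: val_inj; rewrite /= /ret_repr f_iinv. Qed.

Lemma magma_iso_Ret : magma_iso X (Ret X).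
Proof.
exists ret_of; split; first exact: Bijective ret_reprK ret_ofK.
by move=> x y; apply: val_inj; rewrite /= !ret_reprK.
Qed.

Lemma sigma_inj_irretractable : irretractable X.
Proof.
exists 0%N; split=> //; first exact: magma_iso_Ret.
by exists id; split=> //; exists id.
Qed.

End Irretractable.

Section LinearMagma.
Context {R : finComUnitRingType} {n : nat} (A B : 'M[R]_n).

Definition linear_magma : magma :=
  {| carrier := 'cV[R]_n; mop := fun x y => A *m x + B *m y |}.

Lemma linear_magma_op_inj :
  B \in unitmx -> forall x : linear_magma, injective (mop x).
Proof. by move=> uB x y z /addrI /(congr1 (mulmx (invmx B))); rewrite !mulKmx. Qed.

Lemma linear_magma_cycle_set :
  B \in unitmx -> A *m A + B *m A = A *m B -> is_cycle_set linear_magma.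
Proof.
move=> uB AB; split=> [x | x y z /=]; first exact/injF_bij/linear_magma_op_inj.
(* (x.y).(x.z) = (A^2 + BA) x + AB y + B^2 z is symmetric in x, y iff A^2 + BA = AB. *)
rewrite !mulmxDr !mulmxA -AB !mulmxDl !addrA; congr (_ + _).
by rewrite (addrC (A *m A *m x)) -!addrA (addrC (B *m A *m y)).
Qed.

Lemma linear_magma_left_transitive :
  A \in unitmx -> forall a b : linear_magma, exists x, mop x a = b.
Proof.
by move=> uA a b; exists (invmx A *m (b - B *m a)); rewrite /= mulKVmx // subrK.
Qed.

Lemma linear_magma_sigma_inj : A \in unitmx -> injective (@sigma linear_magma).
Proof.
move=> uA x y /ffunP/(_ 0); rewrite !ffunE /= => /addIr.
by move/(congr1 (mulmx (invmx A))); rewrite !mulKmx.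
Qed.

End LinearMagma.

Section CharacteristicTwo.
Variable K : finFieldType.
Hypothesis charK : 2%N \in [pchar K].

Local Notation P := (matP K).
Local Notation Q := (matQ K).

Ltac mx2_char2 :=
  apply/matrixP => -[[|[|//]] ?] -[[|[|//]] ?];
  rewrite !mxE !big_ord_recr !big_ord0 /= ?mxE /=;
  rewrite ?(mul1r, mul0r, add0r, addr0, addrr_pchar2 charK) //.

Lemma matP_sqr : P *m P = 1%:M.
Proof. mx2_char2. Qed.

Lemma matQ_sqr : Q *m Q = 1%:M.
Proof. mx2_char2. Qed.

Lemma matQ_sqrD_PQ : Q *m Q + P *m Q = Q *m P.
Proof. mx2_char2. Qed.

Lemma matP_unit : P \in unitmx.
Proof. exact: (mulmx1_unit matP_sqr).1. Qed.

Lemma matQ_unit : Q \in unitmx.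
Proof. exact: (mulmx1_unit matQ_sqr).1. Qed.

Lemma invmx_matQ : invmx Q = Q.
Proof. by rewrite -[LHS]mulmx1 -matQ_sqr mulmxA mulVmx ?mul1mx ?matQ_unit. Qed.

Lemma KMagma_linear : KMagma K = linear_magma Q P.
Proof. by rewrite /KMagma invmx_matQ. Qed.

Lemma KMagma_op_inj (x : KMagma K) : injective (mop x).
Proof. exact (linear_magma_op_inj (invmx Q) P matP_unit x). Qed.

Lemma KMagma_cycle_set : is_cycle_set (KMagma K).
Proof.
by rewrite KMagma_linear; apply: linear_magma_cycle_set matP_unit matQ_sqrD_PQ.
Qed.

Lemma KMagma_indecomposable : indecomposable (KMagma K).
Proof.
apply: indecomposable_left_transitive; first exact: KMagma_op_inj.
by rewrite KMagma_linear; apply: linear_magma_left_transitive matQ_unit.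
Qed.

Lemma KMagma_irretractable : irretractable (KMagma K).
Proof.
rewrite KMagma_linear; apply: sigma_inj_irretractable.
exact: linear_magma_sigma_inj matQ_unit.
Qed.

Lemma col2K (v : 'cV[K]_2) : v = col2 (v ord0 0) (v ord_max 0).
Proof.
apply/matrixP => -[[|[|//]] ?] -[[|//] ?]; rewrite !mxE /=.
all: by congr (v _ _); apply: val_inj.
Qed.

Lemma col2_eq (a b c d : K) : (col2 a b == col2 c d) = (a == c) && (b == d).
Proof.
apply/eqP/andP => [e | [/eqP-> /eqP->] //].
have := congr1 (fun v : 'cV[K]_2 => (v ord0 0, v ord_max 0)) e.
by rewrite /= !mxE => -[-> ->].
Qed.

Lemma col2_opE (a b c d : K) :
  @mop (KMagma K) (col2 a b) (col2 c d) = col2 (a + c + d) (a + b + d).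
Proof.
rewrite /= invmx_matQ; apply/matrixP => -[[|[|//]] ?] -[[|//] ?];
by rewrite !mxE !big_ord_recr !big_ord0 /= !mxE /=; ring.
Qed.

Lemma addrrl_pchar2 (x y : K) : x + x + y = y.
Proof. by rewrite (addrr_pchar2 charK) add0r. Qed.

Lemma addrrm_pchar2 (x y : K) : x + y + x = y.
Proof. by rewrite addrAC addrrl_pchar2. Qed.

Lemma addrrr_pchar2 (x y : K) : y + x + x = y.
Proof. exact: (addrK_pchar2 charK). Qed.

Lemma pair_add3_closed (a b u v w : K) :
  u \in [:: a; b] -> v \in [:: a; b] -> w \in [:: a; b] -> u + v + w \in [:: a; b].
Proof.
rewrite !inE => /orP[]/eqP-> /orP[]/eqP-> /orP[]/eqP->;
  by rewrite ?addrrl_pchar2 ?addrrm_pchar2 ?addrrr_pchar2 eqxx ?orbT.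
Qed.

Lemma generated_col2 (x1 x2 : K) :
  generated (X := KMagma K) (col2 x1 x2)
    [set col2 x1 x2; col2 x1 x1; col2 x2 x2; col2 x2 x1].
Proof.
set S := [set _; _; _; _].
have memS u v : (col2 u v \in S) = (u \in [:: x1; x2]) && (v \in [:: x1; x2]).
  rewrite !inE !col2_eq.
  by case: (u == x1); case: (u == x2); case: (v == x1); case: (v == x2).
apply: generated_closed => [|||T Tcl xT]; first exact: KMagma_op_inj.
- by rewrite memS !inE !eqxx ?orbT.
- move=> y z; rewrite (col2K y) (col2K z) col2_opE !memS => /andP[y1 y2] /andP[z1 z2].
  by rewrite !pair_add3_closed.
have xx : @mop (KMagma K) (col2 x1 x2) (col2 x1 x2) = col2 x2 x1.
  by rewrite col2_opE addrrl_pchar2 addrrr_pchar2.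
have x_xx : @mop (KMagma K) (col2 x1 x2) (col2 x2 x1) = col2 x2 x2.
  by rewrite col2_opE addrrm_pchar2.
have xx_x : @mop (KMagma K) (col2 x2 x1) (col2 x1 x2) = col2 x1 x1.
  by rewrite col2_opE addrrm_pchar2.
have xxT : col2 x2 x1 \in T by rewrite -xx Tcl.
apply/subsetP => y; rewrite !inE => /orP[/orP[/orP[]|]|] /eqP-> //.
- by rewrite -xx_x Tcl.
- by rewrite -x_xx Tcl.
Qed.

End CharacteristicTwo.

Theorem mainTheorem9 (K : finFieldType) (charK : 2%N \in [pchar K]) :
  is_cycle_set (KMagma K) /\ indecomposable (KMagma K) /\
  irretractable (KMagma K) /\
  (forall x1 x2 : K,
     generated (X := KMagma K) (col2 x1 x2)
       (if x1 == x2 then [set col2 x1 x2]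
        else [set col2 x1 x2; col2 x1 x1; col2 x2 x2; col2 x2 x1])).
Proof.
split; first exact: KMagma_cycle_set.
split; first exact: KMagma_indecomposable.
split; first exact: KMagma_irretractable.
move=> x1 x2; case: eqP => [<- | _]; last exact: generated_col2.
have -> : [set col2 x1 x1] = [set col2 x1 x1; col2 x1 x1; col2 x1 x1; col2 x1 x1].
  by apply/setP => v; rewrite !inE !orbb.
exact: generated_col2.
Qed.
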